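(* Let $A\cong \mathrm{Aff}(E,C)$ be a group of affine cyclic type. Let $G$ be a finite group with a normal subgroup $N$ such that $G/N\cong A$, and assume that no proper subgroup of $G$ has a quotient isomorphic to $A$. Then $G$ is a group of the form $P\rtimes \mathbb{Z}_m$, where $P$ is a $p$-group, $m$ is a power of a prime $q\ne p$, and the image of $\mathbb{Z}_m$ in $\mathrm{Aut}(P)$ has order at least $|C|$.
   Context: A group of affine cyclic type $\mathrm{Aff}(E,C)$ is a finite group $E\rtimes C$ where $E$ is an elementary abelian $p$-group and $C$ is a cyclic group of prime power order acting faithfully on $E$, with $p\nmid|C|$. $\mathbb{Z}_m$ denotes the cyclic group of order $m$. *)

From mathcomp Require Import all_boot all_fingroup all_solvable.
Set Implicit Arguments.
Unset Strict Implicit.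
Unset Printing Implicit Defensive.

From mathcomp Require Import all_boot all_fingroup all_solvable.

(* The composite phi : G -> G/N ~ A is onto, and by minimality no proper
   subgroup of G maps onto A.  A Sylow p-subgroup S of G maps onto the normal
   Sylow subgroup E of A, so the Frattini argument G = phi^-1(E) N_G(S) gives
   phi(N_G(S)) = A, whence S <| G.  The q-part x of a preimage of a generator
   of C generates a subgroup mapped onto C, so S<x> maps onto EC = A and
   S<x> = G, a semidirect product since |S| and #[x] are coprime.  Finally phi
   maps C_<x>(S) into C_C(E) = 1, so the image <x>/C_<x>(S) of <x> in Aut(S)
   is at least as large as phi(<x>) = C. *)

Set Implicit Arguments.
Unset Strict Implicit.
Unset Printing Implicit Defensive.

Local Open Scope group_scope.

Lemma quotient_minimal_cover (gT aT : finGroupType) (G N : {group gT})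
    (A : {group aT}) :
  N <| G -> G / N \isog A ->
  (forall H M : {group gT}, H \proper G -> M <| H -> ~ H / M \isog A) ->
  exists phi : {morphism G >-> aT},
    phi @* G = A /\ forall H : {group gT}, H \subset G -> phi @* H = A -> H :=: G.
Proof.
move=> nsNG /isogP[f _ fGN] minA.
have sGD : G \subset coset N @*^-1 (G / N).
  by rewrite -sub_morphim_pre ?normal_norm.
pose phi := restrm sGD (f \o coset N).
have phiE (H : {group gT}) : H \subset G -> phi @* H = f @* (H / N).
  by move=> sHG; rewrite restrmEsub // morphim_comp.
exists phi; split=> [|H sHG phiH]; first by rewrite phiE.
apply/eqP; apply: contraT => neHG.
have prHG : H \proper G by rewrite properEneq neHG.
have nsKH : 'ker_H phi <| H by rewrite -(ker_restrm sHG) ker_normal.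
by case: (minA H _ prHG nsKH); rewrite -phiH first_isog_loc.
Qed.

Lemma sdprod_normal_Sylow (gT : finGroupType) (A E C : {group gT}) p :
  prime p -> p.-group E -> ~~ (p %| #|C|) -> E ><| C = A -> p.-Sylow(A) E.
Proof.
move=> pr_p pE p'C defA; have [nsEA _ _ _ _] := sdprod_context defA.
by rewrite /pHall (normal_sub nsEA) pE -(index_sdprod defA) p'natE.
Qed.

Lemma exists_p'prime_pgroup (gT : finGroupType) (C : {group gT}) (p q : nat) :
  prime p -> q.-group C -> ~~ (p %| #|C|) ->
  exists r, [/\ prime r, r != p & r.-group C].
Proof.
move=> pr_p qC p'C; have [-> | ntC] := eqsVneq C 1.
  exists (pdiv p.+1); split; last exact: pgroup1.
    by rewrite pdiv_prime // ltnS prime_gt0.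
  apply: contraTneq (pdiv_dvd p.+1) => ->.
  by rewrite -addn1 dvdn_addr // gtnNdvd // prime_gt1.
exists q; have [pr_q q_dvd_C _] := pgroup_pdiv qC ntC.
by split=> //; apply: contraNneq p'C => <-.
Qed.

Section MinimalCover.

Variables (gT aT : finGroupType) (G : {group gT}) (A : {group aT}).
Variable phi : {morphism G >-> aT}.
Hypothesis phiG : phi @* G = A.
Hypothesis minG : forall H : {group gT}, H \subset G -> phi @* H = A -> H :=: G.

Lemma minimal_cover_normal_Sylow p (S : {group gT}) :
  p.-Sylow(G) S -> phi @* S <| A -> S <| G.
Proof.
move=> sylS nsSA; have sSG := pHall_sub sylS.
pose K := [group of phi @*^-1 (phi @* S)].
have sSK : S \subset K by rewrite -sub_morphim_pre.
have preA : phi @*^-1 A = G by rewrite -phiG morphimGK ?subsetIl.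
have nsKG : K <| G by rewrite -[X in _ <| X]preA morphpre_normal ?phiG ?normal_sub.
have sylSK : p.-Sylow(K) S := pHall_subl sSK (normal_sub nsKG) sylS.
have phiN : phi @* 'N_G(S) = A.
  have := congr1 (fun X => phi @* X) (Frattini_arg nsKG sylSK).
  rewrite /= phiG morphimMl ?normal_sub // morphpreK ?morphimS // => <-.
  by rewrite mulSGid // morphimS // subsetI sSG normG.
by rewrite /normal sSG -(minG (subsetIl G 'N(S)) phiN) subsetIr.
Qed.

Lemma lift_cyclic_pi_group pi (C : {group aT}) :
  C \subset A -> cyclic C -> pi.-group C ->
  exists x, [/\ x \in G, pi.-elt x & phi @* <[x]> = C].
Proof.
move=> sCA /cyclicP[c defC] piC; have Cc : c \in C by rewrite defC cycle_id.
have pi_c : pi.-elt c := mem_p_elt piC Cc.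
have /morphimP[g _ Gg phig] : c \in phi @* G by rewrite phiG (subsetP sCA).
exists g.`_pi; split; [exact: groupX | exact: p_elt_constt |].
by rewrite morphim_cycle ?groupX // morph_constt // -phig constt_p_elt.
Qed.

Lemma minimal_cover_sdprod (S Z : {group gT}) :
  S <| G -> Z \subset G -> coprime #|S| #|Z| ->
  phi @* S * phi @* Z = A -> S ><| Z = G.
Proof.
move=> nsSG sZG coSZ phiSZ; have [sSG nSG] := andP nsSG.
have nSZ := subset_trans sZG nSG.
rewrite sdprodE ?coprime_TIg // -norm_joinEr //.
by apply: minG; rewrite ?join_subG ?sSG //= norm_joinEr // morphimMl.
Qed.

Lemma card_conj_aut_morphim (S Z : {group gT}) :
  S \subset G -> Z \subset G -> Z \subset 'N(S) ->
  'C_(phi @* Z)(phi @* S) = 1 -> #|phi @* Z| <= #|conj_aut S @* Z|.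
Proof.
move=> sSG sZG nSZ tiC.
have cSZ_ker : Z :&: 'C(S) \subset 'ker phi.
  rewrite -sub_morphim_pre ?(subset_trans (subsetIl _ _)) // -tiC subsetI.
  by rewrite morphimS ?subsetIl // morphim_cents ?subsetIr.
rewrite (card_morphim (conj_aut S)) ker_conj_aut (setIidPr nSZ) -indexgI.
rewrite card_morphim (setIidPr sZG).
exact: dvdn_leq (indexg_gt0 _ _) (indexgS _ cSZ_ker).
Qed.

End MinimalCover.

Theorem lemma3p11 (aT gT : finGroupType) (A E C : {group aT}) (p q : nat)
    (G N : {group gT}) :
  prime p -> p.-abelem E ->
  prime q -> q.-group C -> cyclic C ->
  ~~ (p %| #|C|) ->
  'C_C(E) = 1 ->
  E ><| C = A ->
  N <| G -> (G / N) \isog A ->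
  (forall H M : {group gT}, H \proper G -> M <| H -> ~ ((H / M) \isog A)) ->
  exists (P Z : {group gT}) (r : nat),
    [/\ P ><| Z = G, p.-group P, cyclic Z,
        [/\ prime r, r != p & r.-group Z]
      & #|C| <= #|conj_aut P @* Z| ].
Proof.
move=> pr_p abE _ qC cycC p'C tiCE defA nsNG isoA minA.
have [phi [phiG minG]] := quotient_minimal_cover nsNG isoA minA.
have [nsEA sCA mulEC _ _] := sdprod_context defA.
have sylE := sdprod_normal_Sylow pr_p (abelem_pgroup abE) p'C defA.
have [S sylS] := Sylow_exists p G; have pS := pHall_pgroup sylS.
have phiS : phi @* S = E.
  apply: uniq_normal_Hall sylE nsEA _; apply: Hall_max.
  by rewrite -phiG; apply: morphim_pSylow (pHall_sub sylS) sylS.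
have nsSG : S <| G.
  by apply: (minimal_cover_normal_Sylow phiG minG sylS); rewrite phiS.
have [r [pr_r r'p rC]] := exists_p'prime_pgroup pr_p qC p'C.
have [x [Gx r_x phiZ]] := lift_cyclic_pi_group phiG sCA cycC rC.
have sZG : <[x]> \subset G by rewrite cycle_subG.
have coSZ : coprime #|S| #[x].
  by apply: sub_pnat_coprime pS r_x => s /eqnP->; rewrite !inE.
exists S, <[x]>%G, r; split; rewrite ?cycle_cyclic //.
  by apply: (minimal_cover_sdprod minG) => //; rewrite phiS phiZ.
rewrite -{1}phiZ card_conj_aut_morphim ?(pHall_sub sylS) ?phiZ ?phiS //.
exact: subset_trans sZG (normal_norm nsSG).
Qed.
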